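(* Let $\psi=\Gamma'/\Gamma$ be the digamma function. For all $z>0$, $\frac1{2z}<\psi\big(z+\tfrac12\big)-\psi(z)<\ln\big(1+\tfrac1{2z}\big)+\frac1z-\frac2{2z+1}$. *)

From Stdlib Require Import Reals.
From Coquelicot Require Import Coquelicot.
Open Scope R_scope.

Definition Gamma (z : R) : R :=
  RInt_gen (fun t => Rpower t (z - 1) * exp (- t))
           (at_right 0) (Rbar_locally p_infty).

Definition digamma (z : R) : R := Derive Gamma z / Gamma z.

From Stdlib Require Import Reals Lra.
From Coquelicot Require Import Coquelicot.
Open Scope R_scope.

(* Gamma is log-convex (Hoelder's inequality applied to its integral) and
   satisfies Gamma (x + 1) = x Gamma x.  Hence psi = (ln Gamma)' is the limit of
   monotone difference quotients and satisfies ln w - 1 / w <= psi w <= ln w and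
   psi (w + 1) = psi w + 1 / w.  So D w := psi (w + 1/2) - psi w tends to 0 and
   D w - D (w + 1) = 1 / w - 1 / (w + 1/2).  Comparing this step with those of
   1 / (2 w) and of ln (1 + 1 / (2 w - 1)) and telescoping to infinity gives the
   two bounds, strictly because the first comparison is strict. *)

(** * Elementary inequalities and limits *)

Lemma exp_le_exp x y : x <= y -> exp x <= exp y.
Proof. intros [H|H]; [left; apply exp_increasing; exact H | subst; lra]. Qed.

Lemma ln_le_sub1 y : 0 < y -> ln y <= y - 1.
Proof.
  intros Hy. pose proof (exp_ineq1_le (ln y)) as H. rewrite exp_ln in H; lra.
Qed.

Lemma one_sub_inv_le_ln y : 0 < y -> 1 - / y <= ln y.
Proof.
  intros Hy. pose proof (ln_le_sub1 (/ y) (Rinv_0_lt_compat _ Hy)) as H.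
  rewrite ln_Rinv in H; lra.
Qed.

Lemma ln_diff_quot_bounds w h : 0 < w -> 0 < h ->
  / (w + h) <= (ln (w + h) - ln w) / h <= / w.
Proof.
  intros Hw Hh.
  assert (Hr : 0 < (w + h) / w) by (apply Rdiv_lt_0_compat; lra).
  rewrite <- ln_div by lra.
  pose proof (ln_le_sub1 _ Hr). pose proof (one_sub_inv_le_ln _ Hr).
  split.
  - apply (Rmult_le_reg_r h); [lra|].
    unfold Rdiv at 1. rewrite Rmult_assoc, Rinv_l, Rmult_1_r by lra.
    replace (/ (w + h) * h) with (1 - / ((w + h) / w)) by (field; lra). lra.
  - apply (Rmult_le_reg_r h); [lra|].
    unfold Rdiv at 1. rewrite Rmult_assoc, Rinv_l, Rmult_1_r by lra.
    replace (/ w * h) with ((w + h) / w - 1) by (field; lra). lra.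
Qed.

Lemma exp_convex l p q : 0 <= l <= 1 ->
  exp (l * p + (1 - l) * q) <= l * exp p + (1 - l) * exp q.
Proof.
  intros Hl. set (m := l * p + (1 - l) * q).
  (* each exponential lies above its tangent line at m *)
  assert (Ht : forall r, exp m * (1 + (r - m)) <= exp r).
  { intros r. replace (exp r) with (exp m * exp (r - m)) by (rewrite <- exp_plus; f_equal; ring).
    apply Rmult_le_compat_l; [left; apply exp_pos | apply exp_ineq1_le]. }
  pose proof (Ht p) as Hp. pose proof (Ht q) as Hq.
  assert (E : l * (exp m * (1 + (p - m))) + (1 - l) * (exp m * (1 + (q - m))) = exp m)
    by (unfold m; ring).
  nra.
Qed.

Lemma exp_sub1_bounds u : u <= exp u - 1 <= u * exp u.
Proof.
  pose proof (exp_ineq1_le u). pose proof (exp_ineq1_le (- u)) as Hn.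
  rewrite exp_Ropp in Hn. pose proof (exp_pos u).
  assert (Hm : exp u * (1 + - u) <= exp u * / exp u) by (apply Rmult_le_compat_l; lra).
  rewrite Rinv_r in Hm by lra. nra.
Qed.

Lemma exp_neg_le_inv u : 0 <= u -> exp (- u) <= / (1 + u).
Proof.
  intros Hu. rewrite exp_Ropp. apply Rinv_le_contravar; [lra | apply exp_ineq1_le].
Qed.

Lemma is_lim_seq_inv_add a : is_lim_seq (fun n => / (INR n + a)) 0.
Proof.
  apply (is_lim_seq_inv _ p_infty); [|discriminate].
  apply (is_lim_seq_plus _ _ p_infty a); [apply is_lim_seq_INR | apply is_lim_seq_const | reflexivity].
Qed.

Lemma is_lim_seq_0_of_le_inv (u : nat -> R) a C :
  (forall n, Rabs (u n) <= C / (INR n + a)) -> is_lim_seq u 0.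
Proof.
  intros Hu. apply is_lim_seq_abs_0.
  apply (is_lim_seq_le_le (fun _ => 0) _ (fun n => C * / (INR n + a))).
  - intros n. split; [apply Rabs_pos | apply Hu].
  - apply is_lim_seq_const.
  - replace (Finite 0) with (Rbar_mult C 0) by (simpl; f_equal; ring).
    apply is_lim_seq_scal_l, is_lim_seq_inv_add.
Qed.

(** * The Gamma integral *)

Definition gamma_integrand (x t : R) : R := Rpower t (x - 1) * exp (- t).

Lemma gamma_integrand_exp x t : gamma_integrand x t = exp ((x - 1) * ln t - t).
Proof. unfold gamma_integrand, Rpower. rewrite <- exp_plus. f_equal; ring. Qed.

Lemma gamma_integrand_pos x t : 0 < gamma_integrand x t.
Proof. rewrite gamma_integrand_exp; apply exp_pos. Qed.

Lemma continuous_gamma_integrand x t : 0 < t -> continuous (gamma_integrand x) t.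
Proof.
  intros Ht. apply (ex_derive_continuous (K:=R_AbsRing) (V:=R_NormedModule)).
  unfold gamma_integrand, Rpower. auto_derive. exact Ht.
Qed.

Lemma ex_RInt_gamma_integrand x a b : 0 < a -> 0 < b -> ex_RInt (gamma_integrand x) a b.
Proof.
  intros Ha Hb. apply (ex_RInt_continuous (V:=R_CompleteNormedModule)).
  intros t Ht. apply continuous_gamma_integrand.
  assert (0 < Rmin a b) by (apply Rmin_glb_lt; lra). lra.
Qed.

Lemma RInt_gamma_integrand_Chasles x a b c : 0 < a -> 0 < b -> 0 < c ->
  RInt (gamma_integrand x) a b + RInt (gamma_integrand x) b c = RInt (gamma_integrand x) a c.
Proof.
  intros. apply (RInt_Chasles (V:=R_CompleteNormedModule)); apply ex_RInt_gamma_integrand; lra.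
Qed.

Lemma RInt_gamma_integrand_ge0 x a b : 0 < a <= b -> 0 <= RInt (gamma_integrand x) a b.
Proof.
  intros H. apply RInt_ge_0; [lra | apply ex_RInt_gamma_integrand; lra |].
  intros; apply Rlt_le, gamma_integrand_pos.
Qed.

Lemma RInt_gamma_integrand_subinterval x a' a b b' :
  0 < a' -> a' <= a -> a <= b -> b <= b' ->
  RInt (gamma_integrand x) a b <= RInt (gamma_integrand x) a' b'.
Proof.
  intros. rewrite <- (RInt_gamma_integrand_Chasles x a' a b'), <- (RInt_gamma_integrand_Chasles x a b b') by lra.
  pose proof (RInt_gamma_integrand_ge0 x a' a). pose proof (RInt_gamma_integrand_ge0 x b b'). lra.
Qed.

Lemma gamma_integrand_tail x :
  exists K, 0 < K /\ forall t, 1 <= t -> gamma_integrand x t <= K * exp (- t / 2).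
Proof.
  set (M := Rabs (x - 1) + 1).
  assert (HM : 0 < M) by (unfold M; pose proof (Rabs_pos (x - 1)); lra).
  exists (exp (M * (ln (2 * M) - 1))). split; [apply exp_pos|].
  intros t Ht. rewrite gamma_integrand_exp, <- exp_plus. apply exp_le_exp.
  assert (Hl : 0 <= ln t) by (rewrite <- ln_1; apply ln_le; lra).
  assert (H1 : (x - 1) * ln t <= M * ln t).
  { apply Rmult_le_compat_r; [lra|]. unfold M. pose proof (Rle_abs (x - 1)); lra. }
  assert (H2 : ln t <= t / (2 * M) - 1 + ln (2 * M)).
  { assert (Hq : 0 < t / (2 * M)) by (apply Rdiv_lt_0_compat; lra).
    replace (ln t) with (ln (t / (2 * M)) + ln (2 * M)) by (rewrite ln_div by lra; ring).
    pose proof (ln_le_sub1 _ Hq). lra. }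
  assert (H3 : M * ln t <= M * (t / (2 * M) - 1 + ln (2 * M))) by (apply Rmult_le_compat_l; lra).
  replace (M * (t / (2 * M) - 1 + ln (2 * M))) with (t / 2 + M * (ln (2 * M) - 1)) in H3 by (field; lra).
  lra.
Qed.

Lemma RInt_gamma_integrand_head x a : 0 < x -> 0 < a <= 1 ->
  RInt (gamma_integrand x) a 1 <= / x.
Proof.
  intros Hx Ha.
  set (F := fun t => exp (x * ln t) / x).
  set (f := fun t => exp ((x - 1) * ln t)).
  assert (HI : is_RInt f a 1 (F 1 - F a)).
  { apply (is_RInt_derive (V:=R_CompleteNormedModule)).
    - intros t Ht. rewrite Rmin_left, Rmax_right in Ht by lra.
      unfold F, f. auto_derive; [lra|].
      replace ((x - 1) * ln t) with (x * ln t + - ln t) by ring.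
      rewrite exp_plus, exp_Ropp, exp_ln by lra. field. split; lra.
    - intros t Ht. rewrite Rmin_left, Rmax_right in Ht by lra.
      apply (ex_derive_continuous (K:=R_AbsRing) (V:=R_NormedModule)).
      unfold f. auto_derive. lra. }
  apply Rle_trans with (RInt f a 1).
  - apply RInt_le; [lra | apply ex_RInt_gamma_integrand; lra | eexists; exact HI |].
    intros t Ht. rewrite gamma_integrand_exp. unfold f. apply exp_le_exp. lra.
  - rewrite (is_RInt_unique _ _ _ _ HI). unfold F.
    rewrite ln_1, Rmult_0_r, exp_0.
    assert (0 <= exp (x * ln a) / x) by (apply Rdiv_le_0_compat; [left; apply exp_pos | lra]).
    unfold Rdiv in *. lra.
Qed.

Lemma RInt_gamma_integrand_tail x b K : 1 <= b -> 0 < K ->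
  (forall t, 1 <= t -> gamma_integrand x t <= K * exp (- t / 2)) ->
  RInt (gamma_integrand x) 1 b <= 2 * K.
Proof.
  intros Hb HK HT.
  set (F := fun t => - 2 * K * exp (- t / 2)).
  set (f := fun t => K * exp (- t / 2)).
  assert (HI : is_RInt f 1 b (F b - F 1)).
  { apply (is_RInt_derive (V:=R_CompleteNormedModule)).
    - intros t Ht. unfold F, f. auto_derive; [easy|].
      replace (- t * / 2) with (- t / 2) by (unfold Rdiv; ring). field.
    - intros t Ht. apply (ex_derive_continuous (K:=R_AbsRing) (V:=R_NormedModule)).
      unfold f. auto_derive. easy. }
  apply Rle_trans with (RInt f 1 b).
  - apply RInt_le; [lra | apply ex_RInt_gamma_integrand; lra | eexists; exact HI |].
    intros t Ht. apply HT; lra.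
  - rewrite (is_RInt_unique _ _ _ _ HI). unfold F.
    assert (exp (- (1) / 2) <= 1) by (rewrite <- exp_0 at 2; apply exp_le_exp; lra).
    pose proof (exp_pos (- b / 2)).
    assert (K * exp (- (1) / 2) <= K * 1) by (apply Rmult_le_compat_l; lra).
    assert (0 <= K * exp (- b / 2)) by (apply Rmult_le_pos; lra).
    lra.
Qed.

Lemma RInt_gamma_integrand_bounded x : 0 < x ->
  exists B, forall a b, 0 < a <= b -> RInt (gamma_integrand x) a b <= B.
Proof.
  intros Hx. destruct (gamma_integrand_tail x) as [K [HK HT]].
  exists (/ x + 2 * K). intros a b Hab.
  assert (Ha : 0 < Rmin a 1 <= 1) by (split; [apply Rmin_glb_lt; lra | apply Rmin_r]).
  assert (Hb : 1 <= Rmax b 1) by apply Rmax_r.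
  apply Rle_trans with (RInt (gamma_integrand x) (Rmin a 1) (Rmax b 1)).
  { apply RInt_gamma_integrand_subinterval; [lra | apply Rmin_l | lra | apply Rmax_l]. }
  rewrite <- (RInt_gamma_integrand_Chasles x _ 1) by lra.
  pose proof (RInt_gamma_integrand_head x _ Hx Ha).
  pose proof (RInt_gamma_integrand_tail x _ K Hb HK HT). lra.
Qed.

Definition Gamma_trunc (x : R) (n : nat) : R :=
  RInt (gamma_integrand x) (exp (- (INR n + 1))) (INR n + 1).

Lemma Gamma_trunc_bounds n : 0 < exp (- (INR n + 1)) < 1 /\ 1 <= INR n + 1.
Proof.
  pose proof (pos_INR n). split; [split|lra].
  - apply exp_pos.
  - rewrite <- exp_0 at 2. apply exp_increasing. lra.
Qed.

Lemma Gamma_trunc_incr x n : Gamma_trunc x n <= Gamma_trunc x (S n).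
Proof.
  destruct (Gamma_trunc_bounds (S n)) as [[Ha _] _]. destruct (Gamma_trunc_bounds n) as [[_ Ha1] Hb].
  unfold Gamma_trunc. rewrite S_INR in *.
  apply RInt_gamma_integrand_subinterval; [exact Ha | apply exp_le_exp | | ]; lra.
Qed.

Lemma Gamma_trunc_exhaust a b : 0 < a -> exists n, exp (- (INR n + 1)) <= a /\ b <= INR n + 1.
Proof.
  intros Ha. destruct (INR_unbounded (Rmax (- ln a) b)) as [n Hn].
  pose proof (Rmax_l (- ln a) b). pose proof (Rmax_r (- ln a) b).
  exists n. split; [|lra].
  rewrite <- (exp_ln a) by exact Ha. apply exp_le_exp. lra.
Qed.

Lemma ex_finite_lim_Gamma_trunc x : 0 < x -> ex_finite_lim_seq (Gamma_trunc x).
Proof.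
  intros Hx. destruct (RInt_gamma_integrand_bounded x Hx) as [B HB].
  apply ex_finite_lim_seq_incr with B; [apply Gamma_trunc_incr|].
  intros n. destruct (Gamma_trunc_bounds n) as [[Ha Ha1] Hb]. apply HB. lra.
Qed.

Lemma Gamma_trunc_eventually N :
  filter_prod (at_right 0) (Rbar_locally p_infty)
    (fun ab => 0 < fst ab <= exp (- (INR N + 1)) /\ INR N + 1 <= snd ab).
Proof.
  assert (HaN : 0 < exp (- (INR N + 1))) by apply exp_pos.
  apply Filter_prod with (fun a => 0 < a <= exp (- (INR N + 1))) (fun b => INR N + 1 <= b).
  - exists (mkposreal _ HaN). intros y Hy Hy0. split; [exact Hy0|].
    apply Rabs_def2 in Hy. simpl in Hy. unfold minus, plus, opp in Hy; simpl in Hy. lra.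
  - exists (INR N + 1). intros; lra.
  - intros a b Ha Hb. split; assumption.
Qed.

(* Monotonicity in the interval squeezes every RInt over [a, b] near (0, +oo)
   between two truncations. *)
Lemma is_RInt_gen_Gamma_trunc x (l : R) : is_lim_seq (Gamma_trunc x) l ->
  is_RInt_gen (gamma_integrand x) (at_right 0) (Rbar_locally p_infty) l.
Proof.
  intros Hl.
  assert (Hle : forall n, Gamma_trunc x n <= l)
    by (apply is_lim_seq_incr_compare; [exact Hl | apply Gamma_trunc_incr]).
  intros P [eps HP].
  apply is_lim_seq_Reals in Hl. destruct (Hl eps (cond_pos eps)) as [N HN].
  specialize (HN N (Nat.le_refl N)). apply Rabs_def2 in HN.
  refine (filter_imp _ _ _ (Gamma_trunc_eventually N)).
  intros [a b] [[Ha0 Ha] Hb]; simpl in *.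
  destruct (Gamma_trunc_bounds N) as [[_ HaN1] HbN].
  exists (RInt (gamma_integrand x) a b). split.
  - apply (RInt_correct (V:=R_CompleteNormedModule)). apply ex_RInt_gamma_integrand; lra.
  - apply HP.
    destruct (Gamma_trunc_exhaust a b Ha0) as [m [Hm1 Hm2]].
    assert (H1 : Gamma_trunc x N <= RInt (gamma_integrand x) a b)
      by (apply RInt_gamma_integrand_subinterval; lra).
    assert (H2 : RInt (gamma_integrand x) a b <= Gamma_trunc x m)
      by (apply RInt_gamma_integrand_subinterval; try lra; apply exp_pos).
    pose proof (Hle m).
    apply Rabs_def1; simpl; unfold minus, plus, opp; simpl; lra.
Qed.

Lemma Gamma_trunc_cvg x : 0 < x -> is_lim_seq (Gamma_trunc x) (Gamma x).
Proof.
  intros Hx. destruct (ex_finite_lim_Gamma_trunc x Hx) as [l Hl].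
  replace (Gamma x) with l; [exact Hl|].
  symmetry. unfold Gamma. apply (is_RInt_gen_unique (V:=R_CompleteNormedModule)).
  exact (is_RInt_gen_Gamma_trunc x l Hl).
Qed.

Lemma Gamma_pos x : 0 < x -> 0 < Gamma x.
Proof.
  intros Hx. destruct (Gamma_trunc_bounds 0) as [[Ha Ha1] Hb].
  apply Rlt_le_trans with (Gamma_trunc x 0).
  - apply RInt_gt_0; [lra | intros; apply gamma_integrand_pos |].
    intros t Ht. apply continuous_gamma_integrand. lra.
  - apply is_lim_seq_incr_compare; [apply Gamma_trunc_cvg, Hx | apply Gamma_trunc_incr].
Qed.

(* Integration by parts: t^x e^(-t) is a primitive of x t^(x-1) e^(-t) - t^x e^(-t). *)
Lemma Gamma_trunc_succ x n : 0 < x ->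
  Gamma_trunc (x + 1) n - x * Gamma_trunc x n =
  gamma_integrand (x + 1) (exp (- (INR n + 1))) - gamma_integrand (x + 1) (INR n + 1).
Proof.
  intros Hx. unfold Gamma_trunc.
  destruct (Gamma_trunc_bounds n) as [[Ha Ha1] Hb].
  set (a := exp (- (INR n + 1))) in *. set (b := INR n + 1) in *.
  set (F := fun t => - exp (x * ln t - t)).
  assert (HI : is_RInt (fun t => gamma_integrand (x + 1) t - x * gamma_integrand x t) a b (F b - F a)).
  { apply (is_RInt_derive (V:=R_CompleteNormedModule)).
    - intros t Ht. rewrite Rmin_left, Rmax_right in Ht by lra.
      unfold F. auto_derive; [lra|].
      rewrite !gamma_integrand_exp.
      replace ((x + 1 - 1) * ln t - t) with ((x - 1) * ln t - t + ln t) by ring.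
      replace (x * ln t + - t) with ((x - 1) * ln t - t + ln t) by ring.
      rewrite exp_plus, exp_ln by lra. field. lra.
    - intros t Ht. rewrite Rmin_left, Rmax_right in Ht by lra.
      apply (continuous_minus (K:=R_AbsRing) (V:=R_NormedModule)); [apply continuous_gamma_integrand; lra|].
      apply (continuous_scal_r (K:=R_AbsRing) (V:=R_NormedModule)). apply continuous_gamma_integrand; lra. }
  assert (HL : is_RInt (fun t => gamma_integrand (x + 1) t - x * gamma_integrand x t) a b
                 (RInt (gamma_integrand (x + 1)) a b - x * RInt (gamma_integrand x) a b)).
  { apply (is_RInt_minus (V:=R_NormedModule)); [|apply (is_RInt_scal (V:=R_NormedModule))];
      apply (RInt_correct (V:=R_CompleteNormedModule)), ex_RInt_gamma_integrand; lra. }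
  rewrite <- (is_RInt_unique _ _ _ _ HL), (is_RInt_unique _ _ _ _ HI).
  unfold F. rewrite !gamma_integrand_exp.
  replace ((x + 1 - 1) * ln a - a) with (x * ln a - a) by ring.
  replace ((x + 1 - 1) * ln b - b) with (x * ln b - b) by ring. ring.
Qed.

Lemma is_lim_seq_gamma_integrand_near_0 x : 0 < x ->
  is_lim_seq (fun n => gamma_integrand (x + 1) (exp (- (INR n + 1)))) 0.
Proof.
  intros Hx. apply (is_lim_seq_0_of_le_inv _ 1 (/ x)). intros n. pose proof (pos_INR n).
  rewrite Rabs_pos_eq by apply Rlt_le, gamma_integrand_pos.
  rewrite gamma_integrand_exp, ln_exp.
  apply Rle_trans with (exp (- (x * (INR n + 1)))).
  { apply exp_le_exp. pose proof (exp_pos (- (INR n + 1))). nra. }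
  apply Rle_trans with (/ (1 + x * (INR n + 1))); [apply exp_neg_le_inv; nra|].
  unfold Rdiv. rewrite <- Rinv_mult. apply Rinv_le_contravar; nra.
Qed.

Lemma is_lim_seq_gamma_integrand_near_infty x :
  is_lim_seq (fun n => gamma_integrand x (INR n + 1)) 0.
Proof.
  destruct (gamma_integrand_tail x) as [K [HK HT]].
  apply (is_lim_seq_0_of_le_inv _ 1 (2 * K)). intros n. pose proof (pos_INR n).
  rewrite Rabs_pos_eq by apply Rlt_le, gamma_integrand_pos.
  apply Rle_trans with (K * exp (- ((INR n + 1) / 2))).
  { replace (- ((INR n + 1) / 2)) with (- (INR n + 1) / 2) by field. apply HT. lra. }
  apply Rle_trans with (K * / (1 + (INR n + 1) / 2)).
  { apply Rmult_le_compat_l; [lra | apply exp_neg_le_inv; lra]. }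
  replace (2 * K / (INR n + 1)) with (K * / ((INR n + 1) / 2)) by (field; lra).
  apply Rmult_le_compat_l; [lra | apply Rinv_le_contravar; lra].
Qed.

Lemma Gamma_succ x : 0 < x -> Gamma (x + 1) = x * Gamma x.
Proof.
  intros Hx.
  assert (L1 : is_lim_seq (fun n => Gamma_trunc (x + 1) n - x * Gamma_trunc x n)
                 (Gamma (x + 1) - x * Gamma x)).
  { apply is_lim_seq_minus'; [apply Gamma_trunc_cvg; lra|].
    apply (is_lim_seq_scal_l _ x (Gamma x)), Gamma_trunc_cvg; lra. }
  assert (L2 : is_lim_seq (fun n => Gamma_trunc (x + 1) n - x * Gamma_trunc x n) (0 - 0)).
  { apply (is_lim_seq_ext (fun n => gamma_integrand (x + 1) (exp (- (INR n + 1)))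
                                   - gamma_integrand (x + 1) (INR n + 1))).
    - intros n. symmetry. apply Gamma_trunc_succ, Hx.
    - apply is_lim_seq_minus'; [apply is_lim_seq_gamma_integrand_near_0, Hx |].
      apply is_lim_seq_gamma_integrand_near_infty. }
  pose proof (is_lim_seq_unique _ _ L1) as E1. rewrite (is_lim_seq_unique _ _ L2) in E1.
  injection E1. lra.
Qed.

(* Hoelder's inequality, pointwise: t^(z-1) e^(-t) is the weighted geometric mean
   of t^(x-1) e^(-t) and t^(y-1) e^(-t). *)
Lemma gamma_integrand_weighted_mean x y l A B t : 0 <= l <= 1 -> 0 < A -> 0 < B ->
  gamma_integrand (l * x + (1 - l) * y) t <=
  exp (l * ln A + (1 - l) * ln B) *
    (l / A * gamma_integrand x t + (1 - l) / B * gamma_integrand y t).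
Proof.
  intros Hl HA HB. rewrite !gamma_integrand_exp.
  set (P := (x - 1) * ln t - t). set (Q := (y - 1) * ln t - t).
  replace ((l * x + (1 - l) * y - 1) * ln t - t)
    with ((l * ln A + (1 - l) * ln B) + (l * (P - ln A) + (1 - l) * (Q - ln B)))
    by (unfold P, Q; ring).
  rewrite exp_plus. apply Rmult_le_compat_l; [left; apply exp_pos|].
  apply Rle_trans with (l * exp (P - ln A) + (1 - l) * exp (Q - ln B)); [apply exp_convex, Hl|].
  unfold Rminus at 1 3. rewrite !exp_plus, !exp_Ropp, !exp_ln by lra.
  right. unfold Rdiv. ring.
Qed.

Lemma Gamma_log_convex x y l : 0 < x -> 0 < y -> 0 <= l <= 1 ->
  ln (Gamma (l * x + (1 - l) * y)) <= l * ln (Gamma x) + (1 - l) * ln (Gamma y).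
Proof.
  intros Hx Hy Hl.
  set (z := l * x + (1 - l) * y). assert (Hz : 0 < z) by (unfold z; nra).
  set (A := Gamma x). set (B := Gamma y).
  assert (HA : 0 < A) by (apply Gamma_pos; lra).
  assert (HB : 0 < B) by (apply Gamma_pos; lra).
  set (C := exp (l * ln A + (1 - l) * ln B)).
  set (mean := fun n => C * (l / A * Gamma_trunc x n + (1 - l) / B * Gamma_trunc y n)).
  assert (Hle : forall n, Gamma_trunc z n <= mean n).
  { intros n. unfold mean, Gamma_trunc. destruct (Gamma_trunc_bounds n) as [[Ha Ha1] Hb].
    set (a := exp (- (INR n + 1))) in *. set (b := INR n + 1) in *.
    assert (HI : is_RInt (fun t => C * (l / A * gamma_integrand x t + (1 - l) / B * gamma_integrand y t)) a b
                  (C * (l / A * RInt (gamma_integrand x) a b + (1 - l) / B * RInt (gamma_integrand y) a b))).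
    { apply (is_RInt_scal (V:=R_NormedModule)). apply (is_RInt_plus (V:=R_NormedModule));
        apply (is_RInt_scal (V:=R_NormedModule)); apply (RInt_correct (V:=R_CompleteNormedModule));
        apply ex_RInt_gamma_integrand; lra. }
    rewrite <- (is_RInt_unique _ _ _ _ HI).
    apply RInt_le; [lra | apply ex_RInt_gamma_integrand; lra | eexists; exact HI |].
    intros t _. apply gamma_integrand_weighted_mean; lra. }
  assert (Hmean : is_lim_seq mean (C * (l / A * A + (1 - l) / B * B))).
  { apply (is_lim_seq_scal_l _ C (l / A * A + (1 - l) / B * B)).
    apply is_lim_seq_plus'; apply (is_lim_seq_scal_l _ _ (Finite _)); apply Gamma_trunc_cvg; lra. }
  pose proof (is_lim_seq_le _ _ _ _ Hle (Gamma_trunc_cvg z Hz) Hmean) as HC. simpl in HC.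
  replace (C * (l / A * A + (1 - l) / B * B)) with C in HC by (field; lra).
  apply Rle_trans with (ln C); [apply ln_le; [apply Gamma_pos; lra | exact HC]|].
  unfold C. rewrite ln_exp. lra.
Qed.

(** * Log-Gamma and its derivative *)

Definition lnGamma (x : R) : R := ln (Gamma x).

Lemma lnGamma_succ x : 0 < x -> lnGamma (x + 1) = lnGamma x + ln x.
Proof.
  intros Hx. unfold lnGamma. rewrite Gamma_succ, ln_mult by (try apply Gamma_pos; lra). ring.
Qed.

Lemma lnGamma_chord u v w : 0 < u -> u < v -> v < w ->
  (w - u) * lnGamma v <= (w - v) * lnGamma u + (v - u) * lnGamma w.
Proof.
  intros Hu Huv Hvw.
  set (l := (w - v) / (w - u)).
  assert (Hl : 0 <= l <= 1).
  { unfold l. split; [apply Rdiv_le_0_compat; lra|].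
    apply (Rmult_le_reg_r (w - u)); [lra|]. unfold Rdiv. rewrite Rmult_assoc, Rinv_l by lra. lra. }
  pose proof (Gamma_log_convex u w l Hu ltac:(lra) Hl) as H.
  replace (l * u + (1 - l) * w) with v in H by (unfold l; field; lra).
  replace ((w - v) * lnGamma u + (v - u) * lnGamma w)
    with ((w - u) * (l * lnGamma u + (1 - l) * lnGamma w)) by (unfold l; field; lra).
  apply Rmult_le_compat_l; [lra | exact H].
Qed.

Lemma Rdiv_le_cross a b c d : 0 < c -> 0 < d -> a * d <= b * c -> a / c <= b / d.
Proof.
  intros Hc Hd H.
  replace (a / c) with ((a * d) * / (c * d)) by (field; lra).
  replace (b / d) with ((b * c) * / (c * d)) by (field; lra).
  apply Rmult_le_compat_r; [left; apply Rinv_0_lt_compat; nra | exact H].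
Qed.

Definition lnGamma_slope (z h : R) : R := (lnGamma (z + h) - lnGamma z) / h.

Lemma lnGamma_slope_mono z h1 h2 : 0 < z -> 0 < h1 -> h1 <= h2 ->
  lnGamma_slope z h1 <= lnGamma_slope z h2.
Proof.
  intros Hz H1 [H12|H12]; [|subst; lra].
  unfold lnGamma_slope. apply Rdiv_le_cross; try lra.
  pose proof (lnGamma_chord z (z + h1) (z + h2) Hz ltac:(lra) ltac:(lra)). nra.
Qed.

Lemma lnGamma_slope_lower z d h : 0 < d -> d < z -> 0 < h ->
  (lnGamma z - lnGamma (z - d)) / d <= lnGamma_slope z h.
Proof.
  intros Hd Hdz Hh. unfold lnGamma_slope. apply Rdiv_le_cross; try lra.
  pose proof (lnGamma_chord (z - d) z (z + h) ltac:(lra) ltac:(lra) ltac:(lra)). nra.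
Qed.

(* The right derivative of lnGamma, computed along the steps h = 1 / (n + 1). *)
Definition psi (z : R) : R := real (Lim_seq (fun n => lnGamma_slope z (/ (INR n + 1)))).

Lemma inv_succ_bounds n : 0 < / (INR n + 1) <= 1.
Proof.
  pose proof (pos_INR n). split; [apply Rinv_0_lt_compat; lra|].
  rewrite <- Rinv_1. apply Rinv_le_contravar; lra.
Qed.

Lemma is_lim_seq_psi z : 0 < z -> is_lim_seq (fun n => lnGamma_slope z (/ (INR n + 1))) (psi z).
Proof.
  intros Hz.
  assert (Hex : ex_finite_lim_seq (fun n => lnGamma_slope z (/ (INR n + 1)))).
  { apply ex_finite_lim_seq_decr with ((lnGamma z - lnGamma (z - z / 2)) / (z / 2)).
    - intros n. apply lnGamma_slope_mono; [exact Hz | apply inv_succ_bounds|].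
      rewrite S_INR. pose proof (pos_INR n). apply Rinv_le_contravar; lra.
    - intros n. apply lnGamma_slope_lower; [lra | lra | apply inv_succ_bounds]. }
  destruct Hex as [l Hl]. unfold psi. rewrite (is_lim_seq_unique _ _ Hl). exact Hl.
Qed.

Lemma psi_le_ln w : 0 < w -> psi w <= ln w.
Proof.
  intros Hw.
  assert (H : forall n, lnGamma_slope w (/ (INR n + 1)) <= lnGamma_slope w 1)
    by (intros n; apply lnGamma_slope_mono; [lra | apply inv_succ_bounds..]).
  pose proof (is_lim_seq_le _ _ _ _ H (is_lim_seq_psi w Hw) (is_lim_seq_const _)) as H2.
  simpl in H2. unfold lnGamma_slope in H2. rewrite lnGamma_succ in H2 by lra. lra.
Qed.

Lemma ln_pred_le_psi w : 1 < w -> ln (w - 1) <= psi w.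
Proof.
  intros Hw.
  assert (H : forall n, (lnGamma w - lnGamma (w - 1)) / 1 <= lnGamma_slope w (/ (INR n + 1)))
    by (intros n; apply lnGamma_slope_lower; [lra | lra | apply inv_succ_bounds]).
  pose proof (is_lim_seq_le _ _ _ _ H (is_lim_seq_const _) (is_lim_seq_psi w ltac:(lra))) as H2.
  simpl in H2. replace w with ((w - 1) + 1) in H2 at 1 by ring.
  rewrite lnGamma_succ in H2 by lra. lra.
Qed.

Lemma psi_succ w : 0 < w -> psi (w + 1) = psi w + / w.
Proof.
  intros Hw.
  assert (Hq : is_lim_seq (fun n => (ln (w + / (INR n + 1)) - ln w) / / (INR n + 1)) (/ w)).
  { apply (is_lim_seq_le_le (fun n => / (w + / (INR n + 1))) _ (fun _ => / w)).
    - intros n. apply ln_diff_quot_bounds; [lra | apply inv_succ_bounds].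
    - replace (Finite (/ w)) with (Rbar_inv (w + 0)) by (simpl; do 2 f_equal; ring).
      apply is_lim_seq_inv; [|simpl; intros Hc; injection Hc; lra].
      apply is_lim_seq_plus'; [apply is_lim_seq_const | apply is_lim_seq_inv_add].
    - apply is_lim_seq_const. }
  assert (H : is_lim_seq (fun n => lnGamma_slope (w + 1) (/ (INR n + 1))) (psi w + / w)).
  { apply (is_lim_seq_ext (fun n => lnGamma_slope w (/ (INR n + 1))
                                   + (ln (w + / (INR n + 1)) - ln w) / / (INR n + 1))).
    - intros n. destruct (inv_succ_bounds n) as [Hh _]. pose proof (pos_INR n). unfold lnGamma_slope.
      replace (w + 1 + / (INR n + 1)) with ((w + / (INR n + 1)) + 1) by ring.
      rewrite !lnGamma_succ by lra. field. lra.
    - apply is_lim_seq_plus'; [apply is_lim_seq_psi, Hw | exact Hq]. }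
  pose proof (is_lim_seq_unique _ _ H) as E1.
  rewrite (is_lim_seq_unique _ _ (is_lim_seq_psi (w + 1) ltac:(lra))) in E1.
  injection E1. auto.
Qed.

Lemma psi_bounds w : 0 < w -> ln w - / w <= psi w <= ln w.
Proof.
  intros Hw. split; [|apply psi_le_ln, Hw].
  pose proof (ln_pred_le_psi (w + 1) ltac:(lra)) as H.
  rewrite psi_succ in H by exact Hw. replace (w + 1 - 1) with w in H by ring. lra.
Qed.

(* Coquelicot's [Derive] is the limit of difference quotients along the steps
   [Rbar_loc_seq 0 n = 0 + / (n + 1)], so one-sided information suffices. *)
Lemma Derive_Gamma z : 0 < z -> Derive Gamma z = Gamma z * psi z.
Proof.
  intros Hz. pose proof (Gamma_pos z Hz) as HG.
  set (h := fun n => / (INR n + 1)).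
  set (u := fun n => h n * lnGamma_slope z (h n)).
  assert (Hd : is_lim_seq (fun n => (Gamma (z + h n) - Gamma z) / h n) (Gamma z * psi z)).
  { apply (is_lim_seq_le_le (fun n => Gamma z * lnGamma_slope z (h n)) _
             (fun n => Gamma z * (lnGamma_slope z (h n) * exp (u n)))).
    - intros n. destruct (inv_succ_bounds n) as [Hh _]. fold (h n) in Hh.
      assert (Eq : (Gamma (z + h n) - Gamma z) / h n = Gamma z * ((exp (u n) - 1) / h n)).
      { assert (E : Gamma (z + h n) = exp (lnGamma z + u n)).
        { unfold u, lnGamma_slope. replace (lnGamma z + _) with (lnGamma (z + h n)) by (field; lra).
          unfold lnGamma. rewrite exp_ln; [reflexivity | apply Gamma_pos; lra]. }
        rewrite E, exp_plus. unfold lnGamma. rewrite exp_ln by lra. field. lra. }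
      rewrite Eq. destruct (exp_sub1_bounds (u n)) as [B1 B2].
      split; apply Rmult_le_compat_l; try lra; apply (Rmult_le_reg_r (h n)); try lra;
        unfold Rdiv; rewrite Rmult_assoc, Rinv_l by lra; unfold u in *; lra.
    - apply (is_lim_seq_scal_l _ _ (Finite _)), is_lim_seq_psi, Hz.
    - replace (Gamma z * psi z) with (Gamma z * (psi z * exp 0)) by (rewrite exp_0; ring).
      apply (is_lim_seq_scal_l _ _ (Finite _)), is_lim_seq_mult'; [apply is_lim_seq_psi, Hz|].
      apply (is_lim_seq_continuous exp u); [apply derivable_continuous_pt, derivable_pt_exp|].
      replace 0 with (0 * psi z) by ring.
      apply is_lim_seq_mult'; [apply (is_lim_seq_inv_add 1) | apply is_lim_seq_psi, Hz]. }
  unfold Derive, Lim.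
  rewrite (Lim_seq_ext _ (fun n => (Gamma (z + h n) - Gamma z) / h n)), (is_lim_seq_unique _ _ Hd);
    [reflexivity|].
  intros n. simpl. unfold h. rewrite Rplus_0_l. reflexivity.
Qed.

Lemma digamma_eq_psi z : 0 < z -> digamma z = psi z.
Proof.
  intros Hz. unfold digamma. rewrite Derive_Gamma by exact Hz.
  field. apply Rgt_not_eq, Gamma_pos, Hz.
Qed.

(** * The half-step difference of psi *)

Definition half_gap (x : R) : R := / x - / (x + 1 / 2).

Definition ln_half_ratio (x : R) : R := ln (1 + 1 / (2 * x)).

Lemma half_gap_gt x : 0 < x -> (/ x - / (x + 1)) / 2 < half_gap x.
Proof.
  intros Hx.
  assert (E : half_gap x - (/ x - / (x + 1)) / 2 = / (2 * x * (2 * x + 1) * (x + 1)))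
    by (unfold half_gap; field; lra).
  assert (0 < / (2 * x * (2 * x + 1) * (x + 1)))
    by (apply Rinv_0_lt_compat; repeat apply Rmult_lt_0_compat; lra).
  lra.
Qed.

Lemma half_gap_le x : 1 / 2 < x ->
  half_gap x <= ln_half_ratio (x - 1 / 2) - ln_half_ratio (x + 1 / 2).
Proof.
  intros Hx. unfold ln_half_ratio.
  set (p := 1 + 1 / (2 * (x - 1 / 2))). set (q := 1 + 1 / (2 * (x + 1 / 2))).
  assert (Hp : 0 < p) by (unfold p; assert (0 < 1 / (2 * (x - 1 / 2))) by (apply Rdiv_lt_0_compat; lra); lra).
  assert (Hq : 0 < q) by (unfold q; assert (0 < 1 / (2 * (x + 1 / 2))) by (apply Rdiv_lt_0_compat; lra); lra).
  rewrite <- ln_div by assumption.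
  replace (half_gap x) with (1 - / (p / q)) by (unfold half_gap, p, q; field; lra).
  apply one_sub_inv_le_ln, Rdiv_lt_0_compat; assumption.
Qed.

Lemma ln_half_ratio_bounds x : 0 < x -> 0 <= ln_half_ratio x <= / (2 * x).
Proof.
  intros Hx. unfold ln_half_ratio.
  assert (H : 0 < 1 / (2 * x)) by (apply Rdiv_lt_0_compat; lra).
  split.
  - rewrite <- ln_1. apply ln_le; lra.
  - replace (/ (2 * x)) with (1 + 1 / (2 * x) - 1) by (field; lra). apply ln_le_sub1. lra.
Qed.

Lemma ln_half_ratio_decr x y : 0 < x -> x < y -> ln_half_ratio y < ln_half_ratio x.
Proof.
  intros Hx Hxy. unfold ln_half_ratio, Rdiv. rewrite !Rmult_1_l.
  assert (0 < / (2 * y)) by (apply Rinv_0_lt_compat; lra).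
  apply ln_increasing; [lra|].
  apply Rplus_lt_compat_l, Rinv_lt_contravar; nra.
Qed.

Lemma is_lim_seq_ln_half_ratio a : 0 < a -> is_lim_seq (fun n => ln_half_ratio (a + INR n)) 0.
Proof.
  intros Ha. apply (is_lim_seq_0_of_le_inv _ a (/ 2)). intros n. pose proof (pos_INR n).
  rewrite (Rplus_comm a).
  destruct (ln_half_ratio_bounds (INR n + a)) as [H0 H1]; [lra|].
  rewrite Rabs_pos_eq by exact H0.
  replace (/ 2 / (INR n + a)) with (/ (2 * (INR n + a))) by (field; lra). exact H1.
Qed.

Definition psi_half_gap (w : R) : R := psi (w + 1 / 2) - psi w.

Lemma psi_half_gap_succ w : 0 < w -> psi_half_gap w = half_gap w + psi_half_gap (w + 1).
Proof.
  intros Hw. unfold psi_half_gap, half_gap.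
  replace (w + 1 + 1 / 2) with (w + 1 / 2 + 1) by ring.
  rewrite !psi_succ by lra. ring.
Qed.

Lemma psi_half_gap_small w : 0 < w -> Rabs (psi_half_gap w) <= 2 / w.
Proof.
  intros Hw. unfold psi_half_gap.
  destruct (psi_bounds w Hw) as [Hw1 Hw2].
  destruct (psi_bounds (w + 1 / 2) ltac:(lra)) as [Hh1 Hh2].
  destruct (ln_diff_quot_bounds w (1 / 2) Hw ltac:(lra)) as [Hl1 Hl2].
  assert (Hi : / (w + 1 / 2) <= / w) by (apply Rinv_le_contravar; lra).
  assert (0 < / (w + 1 / 2)) by (apply Rinv_0_lt_compat; lra).
  assert (Hdiff : 0 <= ln (w + 1 / 2) - ln w <= / w * / 2).
  { split; apply (Rmult_le_reg_r (/ (1 / 2))); try (apply Rinv_0_lt_compat; lra);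
      unfold Rdiv in *; lra. }
  replace (2 / w) with (2 * / w) by (unfold Rdiv; ring).
  apply Rabs_le. lra.
Qed.

Lemma is_lim_seq_psi_half_gap a : 0 < a -> is_lim_seq (fun n => psi_half_gap (a + INR n)) 0.
Proof.
  intros Ha. apply (is_lim_seq_0_of_le_inv _ a 2). intros n. pose proof (pos_INR n).
  rewrite (Rplus_comm (INR n)). apply psi_half_gap_small. lra.
Qed.

(* [psi_half_gap w - 1 / (2 w)] decreases along w, w + 1, ... to 0, strictly at the first step. *)
Lemma psi_half_gap_gt z : 0 < z -> / (2 * z) < psi_half_gap z.
Proof.
  intros Hz.
  set (E := fun n => psi_half_gap (z + INR n) - / 2 * / (z + INR n)).
  assert (Hstep : forall w, 0 < w -> psi_half_gap (w + 1) - / 2 * / (w + 1) < psi_half_gap w - / 2 * / w).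
  { intros w Hw. rewrite (psi_half_gap_succ w Hw). pose proof (half_gap_gt w Hw). lra. }
  assert (Hdecr : forall n, E (S n) <= E n).
  { intros n. unfold E. rewrite S_INR, <- Rplus_assoc. pose proof (pos_INR n).
    left. apply Hstep. lra. }
  assert (Hlim : is_lim_seq E 0).
  { replace (Finite 0) with (Finite (0 - / 2 * 0)) by (f_equal; ring).
    apply is_lim_seq_minus'; [apply is_lim_seq_psi_half_gap, Hz|].
    apply (is_lim_seq_scal_l _ _ (Finite 0)).
    apply (is_lim_seq_ext (fun n => / (INR n + z))); [intros n; f_equal; ring|].
    apply is_lim_seq_inv_add. }
  pose proof (is_lim_seq_decr_compare _ _ Hlim Hdecr 1) as H1.
  unfold E in H1. simpl INR in H1.
  pose proof (Hstep z Hz). rewrite Rinv_mult. lra.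
Qed.

(* [psi_half_gap w - ln_half_ratio (w - 1/2)] increases along w = z + 1, z + 2, ... to 0. *)
Lemma psi_half_gap_lt z : 0 < z -> psi_half_gap z < half_gap z + ln_half_ratio z.
Proof.
  intros Hz.
  set (W := fun n => psi_half_gap (z + 1 + INR n) - ln_half_ratio (z + 1 / 2 + INR n)).
  assert (Hincr : forall n, W n <= W (S n)).
  { intros n. unfold W. rewrite S_INR. pose proof (pos_INR n).
    replace (z + 1 + (INR n + 1)) with (z + 1 + INR n + 1) by ring.
    rewrite (psi_half_gap_succ (z + 1 + INR n)) by lra.
    pose proof (half_gap_le (z + 1 + INR n) ltac:(lra)) as Hg.
    replace (z + 1 + INR n - 1 / 2) with (z + 1 / 2 + INR n) in Hg by lra.
    replace (z + 1 + INR n + 1 / 2) with (z + 1 / 2 + (INR n + 1)) in Hg by ring.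
    lra. }
  assert (Hlim : is_lim_seq W 0).
  { replace (Finite 0) with (Finite (0 - 0)) by (f_equal; ring).
    apply is_lim_seq_minus'; [apply is_lim_seq_psi_half_gap | apply is_lim_seq_ln_half_ratio]; lra. }
  pose proof (is_lim_seq_incr_compare _ _ Hlim Hincr 0) as H0.
  unfold W in H0. simpl INR in H0. rewrite !Rplus_0_r in H0.
  rewrite (psi_half_gap_succ z Hz).
  pose proof (ln_half_ratio_decr z (z + 1 / 2) Hz ltac:(lra)). lra.
Qed.

Theorem lemma3 (z : R) (hz : 0 < z) :
  1 / (2 * z) < digamma (z + 1 / 2) - digamma z /\
  digamma (z + 1 / 2) - digamma z < ln (1 + 1 / (2 * z)) + 1 / z - 2 / (2 * z + 1).
Proof.
  rewrite !digamma_eq_psi by lra. fold (psi_half_gap z).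
  replace (1 / (2 * z)) with (/ (2 * z)) at 1 by (field; lra).
  replace (ln (1 + 1 / (2 * z)) + 1 / z - 2 / (2 * z + 1)) with (half_gap z + ln_half_ratio z)
    by (unfold half_gap, ln_half_ratio; field; lra).
  split; [apply psi_half_gap_gt | apply psi_half_gap_lt]; exact hz.
Qed.
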